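(* Assume $(X,T)$ has the b.i.p.-property. Then for every $a\in\mathcal W^1$ and a.e. $\omega\in\Omega_a$ there exist $\alpha_\omega,\beta_\omega\in\mathbb N$ such that (i) $\mathcal W^n_\omega(a,b)\ne\emptyset$ for all $n\ge\alpha_\omega$ and all $b\in\mathcal W^1_{\theta^n\omega}$; (ii) $\mathcal W^n_{\theta^{-n}\omega}(b,a)\ne\emptyset$ for all $n\ge\beta_\omega$ and all $b\in\mathcal W^1_{\theta^{-n}\omega}$.
   Context: Let $(\Omega,\mathcal F,P)$ be a probability space and $\theta:\Omega\to\Omega$ an invertible, bimeasurable, $P$-preserving, ergodic map. Let $\ell:\Omega\to\mathbb N\cup\{\infty\}$ be measurable with $\ell_\omega>1$, and for a.e. $\omega$ let $A_\omega=(\alpha_{ij}(\omega))_{0\le i<\ell_\omega,\,0\le j<\ell_{\theta\omega}}$ be a $\{0,1\}$-matrix depending measurably on $\omega$ such that every row contains an entry $1$. Put $X_\omega=\{x=(x_0,x_1,\dots): x_i<\ell_{\theta^i\omega},\ \alpha_{x_ix_{i+1}}(\theta^i\omega)=1\ \forall i\ge0\}$, $T_\omega:X_\omega\to X_{\theta\omega}$ the left shift, $T^n_\omega=T_{\theta^{n-1}\omega}\circ\cdots\circ T_\omega$. A word $w=(w_0,\dots,w_{n-1})$ is $\omega$-admissible if $w_i<\ell_{\theta^i\omega}$ for all $i<n$ and $\alpha_{w_iw_{i+1}}(\theta^i\omega)=1$ for $i<n-1$; $\mathcal W^n_\omega$ is the set of such words of length $n$ (so $\mathcal W^1_\omega=\{c: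 c<\ell_\omega\}$); $[w]_\omega=\{x\in X_\omega: x_i=w_i,\ i<n\}$; $\Omega_w=\{\omega: w\in\mathcal W^n_\omega\}$; $\mathcal W^n$ is the set of words $w$ of length $n$ with $P(\Omega_w)>0$. For $a,b$, $\mathcal W^n_\omega(a,b)=\{w\in\mathcal W^n_\omega: w_0=a,\ \alpha_{w_{n-1}b}(\theta^{n-1}\omega)=1\}$. $(X,T)$ is topologically mixing if for all $a,b\in\mathcal W^1$ there is an $\mathbb N$-valued random variable $N_{ab}$ with $[a]_\omega\cap(T^n_\omega)^{-1}[b]_{\theta^n\omega}\ne\emptyset$ whenever $\omega\in\Omega_a$, $n\ge N_{ab}(\omega)$, $\theta^n\omega\in\Omega_b$. Big image property: there exist a measurable $\Omega_{bi}\subset\Omega$ with $P(\Omega_{bi})>0$ and finite sets $\mathcal I^\omega_{bi}\subset\mathcal W^1_\omega$ ($\omega\in\Omega_{bi}$) such that for every $c\in\mathcal W^1_{\theta^{-1}\omega}$ there is $b\in\mathcal I^\omega_{bi}$ with $\alpha_{cb}(\theta^{-1}\omega)=1$. Big preimage property: there exist a measurable $\Omega_{bp}\subset\Omega$ with $P(\Omega_{bp})>0$ and finite sets $\mathcal I^\omega_{bp}\subset\mathcal W^1_{\theta^{-1}\omega}$ ($\omega\in\Omega_{bp}$) such that for every $c\in\mathcal W^1_\omega$ there is $b\in\mathcal I^\omega_{bp}$ with $\alpha_{bc}(\theta^{-1}\omega)=1$. (Without loss of generality the sets $\mathcal I^\omega_{bi}$, resp. $\mathcal I^\omega_{bp}$,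 are contained in a fixed finite set.) $(X,T)$ has the b.i.p.-property if it is topologically mixing and has both the big image and big preimage property. *)

From Stdlib Require Import Reals List Arith.
Open Scope R_scope.

(** A probability space: sigma-algebra [meas] and a countably additive
    probability [P] (only meaningful on measurable sets). *)
Record probability_space (Omega : Type) := {
  meas : (Omega -> Prop) -> Prop;
  P : (Omega -> Prop) -> R;
  meas_full : meas (fun _ => True);
  meas_compl : forall A, meas A -> meas (fun x => ~ A x);
  meas_union : forall A : nat -> Omega -> Prop,
      (forall n, meas (A n)) -> meas (fun x => exists n, A n x);
  P_nonneg : forall A, meas A -> 0 <= P A;
  P_full : P (fun _ => True) = 1;
  P_sigma_additive : forall A : nat -> Omega -> Prop,
      (forall n, meas (A n)) ->
      (forall m n x, A m x -> A n x -> m = n) ->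
      infinite_sum (fun n => P (A n)) (P (fun x => exists n, A n x))
}.
Arguments meas {Omega} p _.
Arguments P {Omega} p _.

Definition invertible_mpt_ergodic {Omega : Type} (PS : probability_space Omega)
  (theta thinv : Omega -> Omega) : Prop :=
  (forall w, thinv (theta w) = w) /\ (forall w, theta (thinv w) = w) /\
  (forall A, meas PS A -> meas PS (fun w => A (theta w))) /\
  (forall A, meas PS A -> meas PS (fun w => A (thinv w))) /\
  (forall A, meas PS A -> P PS (fun w => A (theta w)) = P PS A) /\
  (forall A, meas PS A -> (forall w, A (theta w) <-> A w) ->
     P PS A = 0 \/ P PS A = 1).


(** Lengths in N ∪ {∞}: [None] is ∞. *)
Definition lt_len (c : nat) (l : option nat) : Prop :=
  match l with None => True | Some m => (c < m)%nat end.

Definition random_shift_data {Omega : Type} (PS : probability_space Omega)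
  (theta : Omega -> Omega) (ell : Omega -> option nat)
  (alpha : Omega -> nat -> nat -> bool) : Prop :=
  (forall k, meas PS (fun w => ell w = Some k)) /\
  (forall w, lt_len 1 (ell w)) /\
  (forall i j, meas PS (fun w => alpha w i j = true)) /\
  (forall w i, lt_len i (ell w) ->
     exists j, lt_len j (ell (theta w)) /\ alpha w i j = true).

Definition in_X {Omega : Type} (theta : Omega -> Omega) (ell : Omega -> option nat)
  (alpha : Omega -> nat -> nat -> bool) (w : Omega) (x : nat -> nat) : Prop :=
  forall i, lt_len (x i) (ell (Nat.iter i theta w)) /\
            alpha (Nat.iter i theta w) (x i) (x (S i)) = true.

Definition admissible {Omega : Type} (theta : Omega -> Omega) (ell : Omega -> option nat)
  (alpha : Omega -> nat -> nat -> bool) (w : Omega) (u : list nat) : Prop :=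
  (forall i, (i < length u)%nat -> lt_len (nth i u 0%nat) (ell (Nat.iter i theta w))) /\
  (forall i, (S i < length u)%nat ->
     alpha (Nat.iter i theta w) (nth i u 0%nat) (nth (S i) u 0%nat) = true).

Definition Omega_sym {Omega : Type} (ell : Omega -> option nat) (a : nat) (w : Omega) : Prop :=
  lt_len a (ell w).

Definition in_W1 {Omega : Type} (PS : probability_space Omega)
  (ell : Omega -> option nat) (a : nat) : Prop :=
  P PS (Omega_sym ell a) > 0.

Definition Wab_nonempty {Omega : Type} (theta : Omega -> Omega) (ell : Omega -> option nat)
  (alpha : Omega -> nat -> nat -> bool) (n : nat) (w : Omega) (a b : nat) : Prop :=
  exists u : list nat, length u = n /\ admissible theta ell alpha w u /\
    nth 0 u 0%nat = a /\
    alpha (Nat.iter (n - 1) theta w) (nth (n - 1) u 0%nat) b = true.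

Definition top_mixing {Omega : Type} (PS : probability_space Omega)
  (theta : Omega -> Omega) (ell : Omega -> option nat)
  (alpha : Omega -> nat -> nat -> bool) : Prop :=
  forall a b, in_W1 PS ell a -> in_W1 PS ell b ->
  exists N : Omega -> nat,
    (forall k, meas PS (fun w => N w = k)) /\
    forall w n, Omega_sym ell a w -> (N w <= n)%nat ->
      Omega_sym ell b (Nat.iter n theta w) ->
      exists x, in_X theta ell alpha w x /\ x 0%nat = a /\ x n = b.

Definition big_image {Omega : Type} (PS : probability_space Omega)
  (thinv : Omega -> Omega) (ell : Omega -> option nat)
  (alpha : Omega -> nat -> nat -> bool) : Prop :=
  exists (Obi : Omega -> Prop) (I : Omega -> list nat),
    meas PS Obi /\ P PS Obi > 0 /\
    forall w, Obi w ->
      (forall b, In b (I w) -> lt_len b (ell w)) /\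
      (forall c, lt_len c (ell (thinv w)) ->
         exists b, In b (I w) /\ alpha (thinv w) c b = true).

Definition big_preimage {Omega : Type} (PS : probability_space Omega)
  (thinv : Omega -> Omega) (ell : Omega -> option nat)
  (alpha : Omega -> nat -> nat -> bool) : Prop :=
  exists (Obp : Omega -> Prop) (I : Omega -> list nat),
    meas PS Obp /\ P PS Obp > 0 /\
    forall w, Obp w ->
      (forall b, In b (I w) -> lt_len b (ell (thinv w))) /\
      (forall c, lt_len c (ell w) ->
         exists b, In b (I w) /\ alpha (thinv w) b c = true).

Definition bip_property {Omega : Type} (PS : probability_space Omega)
  (theta thinv : Omega -> Omega) (ell : Omega -> option nat)
  (alpha : Omega -> nat -> nat -> bool) : Prop :=
  top_mixing PS theta ell alpha /\ big_image PS thinv ell alpha /\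
  big_preimage PS thinv ell alpha.

(* Fix a letter [a] of positive probability.  The proof combines three
   ingredients, each holding along almost every orbit of [theta]:
   - only letters of positive probability ever occur on the (two-sided) orbit;
   - every letter occurring at a time n >= 1 of the forward orbit has a
     predecessor, since letters without predecessors have probability zero;
   - by ergodicity and Poincare recurrence the orbit visits infinitely often
     the positive-probability sets on which the big preimage (resp. big
     image) property holds with letters bounded by a fixed M, for (ii)
     together with a fixed bound K on the relevant mixing times.
   (i): at a visit time k+1 beyond all mixing times from [a] to the letters
   [c <= M], each letter at time k+1 is reached from some such [c], hence from
   [a] by topological mixing; later times follow by adding predecessors.
   (ii): at a backward visit time m >= K, mixing joins the letters [h <= M] at
   time -m to [a] at time 0, the big image property prepends any letter at
   time -(m+1), and earlier times follow since every row of [A] has a 1. *)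
From Stdlib Require Import Reals List Arith.
From Stdlib Require Import Lia Lra ClassicalEpsilon Classical FunctionalExtensionality PropExtensionality.
Open Scope R_scope.

Section Measure.
Variable Omega : Type.
Variable PS : probability_space Omega.

Lemma pred_ext (A B : Omega -> Prop) : (forall x, A x <-> B x) -> A = B.
Proof.
  intros H; apply functional_extensionality; intros x.
  apply propositional_extensionality; auto.
Qed.

Lemma meas_ext A B : (forall x, A x <-> B x) -> meas PS A -> meas PS B.
Proof. intros H; rewrite (pred_ext A B H); auto. Qed.

Lemma P_ext A B : (forall x, A x <-> B x) -> P PS A = P PS B.
Proof. intros H; rewrite (pred_ext A B H); auto. Qed.

Lemma meas_empty : meas PS (fun _ => False).
Proof. eapply meas_ext; [|apply meas_compl, meas_full]. simpl; tauto. Qed.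

Lemma meas_cinter (A : nat -> Omega -> Prop) :
  (forall n, meas PS (A n)) -> meas PS (fun x => forall n, A n x).
Proof.
  intros H.
  eapply meas_ext; [|apply meas_compl, meas_union; intros n; apply meas_compl, H].
  intros x; simpl; split.
  - intros Hn n. apply NNPP; intros Hc; apply Hn; eauto.
  - intros Hn [n Hc]; auto.
Qed.

Lemma meas_or A B : meas PS A -> meas PS B -> meas PS (fun x => A x \/ B x).
Proof.
  intros HA HB.
  eapply meas_ext;
    [|apply (meas_union _ PS (fun n => match n with 0%nat => A | _ => B end));
      intros [|n]; auto].
  intros x; simpl; split.
  - intros [[|n] H]; auto.
  - intros [H|H]; [exists 0%nat | exists 1%nat]; auto.
Qed.

Lemma meas_and A B : meas PS A -> meas PS B -> meas PS (fun x => A x /\ B x).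
Proof.
  intros HA HB. apply (meas_ext (fun x => ~ (~ A x \/ ~ B x))).
  - intros x; split.
    + intros H; split; apply NNPP; intro; apply H; auto.
    + intros [? ?] [?|?]; auto.
  - apply meas_compl, meas_or; apply meas_compl; auto.
Qed.

Lemma meas_imp A B : meas PS A -> meas PS B -> meas PS (fun w => A w -> B w).
Proof.
  intros HA HB. apply (meas_ext (fun w => ~ A w \/ B w)).
  - intros x; split.
    + intros [H|H] H'; [contradiction|auto].
    + intros H. destruct (classic (A x)); auto.
  - apply meas_or; auto. apply meas_compl; auto.
Qed.

Lemma meas_cond (Q : Prop) A : meas PS A -> meas PS (fun w => Q /\ A w).
Proof.
  intros HA. destruct (classic Q) as [HQ|HQ].
  - eapply meas_ext; [|exact HA]. intros x; simpl; tauto.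
  - eapply meas_ext; [|exact meas_empty]. intros x; simpl; tauto.
Qed.

(* A constant series converges only if its term is zero: this is how
   countable additivity forces probabilities to vanish. *)
Lemma const_sum_zero c l : infinite_sum (fun _ => c) l -> c = 0.
Proof.
  intros H. destruct (Req_dec c 0) as [|Hc]; auto. exfalso.
  destruct (H (Rabs c / 2)) as [N HN].
  { assert (Rabs c > 0) by (apply Rabs_pos_lt; auto). lra. }
  specialize (HN N ltac:(lia)) as H1. specialize (HN (S N) ltac:(lia)) as H2.
  simpl in H2. unfold Rdist in *. revert H1 H2.
  generalize (sum_f_R0 (fun _ => c) N). intros s. split_Rabs; lra.
Qed.

Lemma P_empty : P PS (fun _ => False) = 0.
Proof.
  pose proof (P_sigma_additive _ PS (fun _ _ => False) (fun _ => meas_empty)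
                (fun m n x H _ => False_ind _ H)) as H.
  simpl in H. rewrite (P_ext (fun x => exists _ : nat, False) (fun _ => False)) in H.
  - eapply const_sum_zero; eauto.
  - intros x; split; [intros [_ []]|tauto].
Qed.

Lemma sum_two_terms (g : nat -> R) l :
  (forall n, (2 <= n)%nat -> g n = 0) -> infinite_sum g l -> l = g 0%nat + g 1%nat.
Proof.
  intros H0 H. eapply uniqueness_sum; eauto.
  intros eps He. exists 1%nat. intros n Hn.
  assert (sum_f_R0 g n = g 0%nat + g 1%nat) as ->.
  { induction n as [|n IH]; [lia|]. destruct n; [reflexivity|].
    change (sum_f_R0 g (S (S n))) with (sum_f_R0 g (S n) + g (S (S n))).
    rewrite IH, (H0 (S (S n))) by lia. lra. }
  unfold Rdist. rewrite Rminus_diag, Rabs_R0; auto.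
Qed.

Lemma P_add2 A B : meas PS A -> meas PS B -> (forall x, A x -> B x -> False) ->
  P PS (fun x => A x \/ B x) = P PS A + P PS B.
Proof.
  intros HA HB Hd.
  set (F := fun n => match n with 0%nat => A | 1%nat => B | _ => fun _ => False end).
  assert (HF : forall n, meas PS (F n)) by (intros [|[|n]]; simpl; auto using meas_empty).
  assert (Hdis : forall m n x, F m x -> F n x -> m = n).
  { intros [|[|m]] [|[|n]] x; simpl; try tauto; intros; exfalso; eauto. }
  pose proof (P_sigma_additive _ PS F HF Hdis) as H.
  apply sum_two_terms in H.
  - simpl in H. rewrite <- H. apply P_ext. intros x; split.
    + intros [Hx|Hx]; [exists 0%nat|exists 1%nat]; auto.
    + intros [[|[|n]] Hx]; simpl in Hx; tauto.
  - intros [|[|n]] Hn; try lia. apply P_empty.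
Qed.

Lemma P_mono A B : meas PS A -> meas PS B -> (forall x, A x -> B x) -> P PS A <= P PS B.
Proof.
  intros HA HB H.
  rewrite (P_ext B (fun x => A x \/ (B x /\ ~ A x))).
  - rewrite P_add2 by (auto using meas_and, meas_compl; intros x ? [? ?]; auto).
    pose proof (P_nonneg _ PS (fun x => B x /\ ~ A x) ltac:(auto using meas_and, meas_compl)).
    lra.
  - intros x; split; [|firstorder]. intros Hb. destruct (classic (A x)); auto.
Qed.

Lemma P_compl A : meas PS A -> P PS (fun x => ~ A x) = 1 - P PS A.
Proof.
  intros HA. rewrite <- (P_full _ PS).
  rewrite (P_ext (fun _ => True) (fun x => A x \/ ~ A x))
    by (intros x; split; auto; intros; apply classic).
  rewrite P_add2; auto using meas_compl. lra.
Qed.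

Lemma least_witness (Q : nat -> Prop) n : Q n -> exists m, Q m /\ forall k, (k < m)%nat -> ~ Q k.
Proof.
  revert n. induction n as [n IH] using lt_wf_ind; intros Hq.
  destruct (classic (exists k, (k < n)%nat /\ Q k)) as [[k [Hk Hqk]]|Hno].
  - exact (IH k Hk Hqk).
  - exists n; split; auto. intros k Hk Hqk; apply Hno; eauto.
Qed.

(* Countable unions of null events are null: disjointify by first index. *)
Lemma P_null_union (A : nat -> Omega -> Prop) :
  (forall n, meas PS (A n)) -> (forall n, P PS (A n) = 0) ->
  P PS (fun x => exists n, A n x) = 0.
Proof.
  intros HA H0.
  set (D := fun n x => A n x /\ forall k, (k < n)%nat -> ~ A k x).
  assert (HD : forall n, meas PS (D n)).
  { intros n. apply meas_and; auto. apply meas_cinter. intros k.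
    destruct (lt_dec k n).
    - eapply meas_ext; [|apply meas_compl, (HA k)]. intros x; simpl; tauto.
    - eapply meas_ext; [|apply meas_full]. intros x; simpl; split; auto; intros; lia. }
  assert (Hdis : forall m n x, D m x -> D n x -> m = n).
  { intros m n x [Am Hm] [An Hn]. destruct (lt_eq_lt_dec m n) as [[Hl|]|Hl]; auto.
    - exfalso; eapply Hn; eauto.
    - exfalso; eapply Hm; eauto. }
  assert (HDz : forall n, P PS (D n) = 0).
  { intros n. pose proof (P_mono (D n) (A n) (HD n) (HA n) (fun x H => proj1 H)).
    pose proof (P_nonneg _ PS (D n) (HD n)). rewrite H0 in *. lra. }
  rewrite (P_ext _ (fun x => exists n, D n x)).
  - eapply uniqueness_sum; [apply (P_sigma_additive _ PS D HD Hdis)|].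
    intros eps He; exists 0%nat; intros n _.
    assert (sum_f_R0 (fun n => P PS (D n)) n = 0) as ->.
    { induction n; simpl; rewrite HDz; [|rewrite IHn]; lra. }
    unfold Rdist; rewrite Rminus_diag, Rabs_R0; auto.
  - intros x; split.
    + intros [n Hn]. destruct (least_witness (fun n => A n x) n Hn) as [m Hm]. eauto.
    + intros [n [Hn _]]; eauto.
Qed.

Lemma null_or A B : meas PS A -> meas PS B -> P PS A = 0 -> P PS B = 0 ->
  P PS (fun x => A x \/ B x) = 0.
Proof.
  intros HA HB Ha Hb.
  rewrite (P_ext _ (fun x => exists n, (match n with 0%nat => A | _ => B end) x)).
  - apply P_null_union; intros [|n]; auto.
  - intros x; split.
    + intros [H|H]; [exists 0%nat|exists 1%nat]; auto.
    + intros [[|n] H]; auto.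
Qed.

Lemma P_pos_exists A Z : meas PS A -> meas PS Z -> P PS A > 0 -> P PS Z = 0 ->
  exists x, A x /\ ~ Z x.
Proof.
  intros HA HZ Hp Hz. apply NNPP; intros Hn.
  assert (P PS A <= P PS Z).
  { apply P_mono; auto. intros x Hx; apply NNPP; intros Hc; apply Hn; eauto. }
  lra.
Qed.

(* If a positive event is covered by countably many events, one of them is
   positive; used to bound the letters in the b.i.p. sets uniformly. *)
Lemma P_pos_union (A : nat -> Omega -> Prop) B :
  (forall n, meas PS (A n)) -> meas PS B -> P PS B > 0 ->
  (forall x, B x -> exists n, A n x) -> exists n, P PS (A n) > 0.
Proof.
  intros HA HB Hp Hs. apply NNPP; intros Hn.
  assert (Hz : forall n, P PS (A n) = 0).
  { intros n. destruct (Rle_lt_or_eq_dec 0 _ (P_nonneg _ PS _ (HA n))); auto.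
    exfalso; apply Hn; eauto. }
  pose proof (P_null_union A HA Hz).
  pose proof (P_mono B _ HB (meas_union _ PS A HA) Hs). lra.
Qed.

End Measure.

Arguments meas_ext {Omega PS}. Arguments P_ext {Omega PS}. Arguments meas_empty {Omega PS}.
Arguments meas_cinter {Omega PS}. Arguments meas_or {Omega PS}. Arguments meas_and {Omega PS}.
Arguments meas_imp {Omega PS}. Arguments meas_cond {Omega PS}. Arguments P_empty {Omega PS}.
Arguments P_mono {Omega PS}. Arguments P_compl {Omega PS}. Arguments P_null_union {Omega PS}.
Arguments null_or {Omega PS}. Arguments P_pos_exists {Omega PS}. Arguments P_pos_union {Omega PS}.

Section Recurrence.
Variable Omega : Type.
Variable PS : probability_space Omega.
Variable f : Omega -> Omega.
Hypothesis f_meas : forall A, meas PS A -> meas PS (fun w => A (f w)).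
Hypothesis f_pres : forall A, meas PS A -> P PS (fun w => A (f w)) = P PS A.
Hypothesis f_ergodic :
  forall A, meas PS A -> (forall w, A (f w) <-> A w) -> P PS A = 0 \/ P PS A = 1.

Lemma iter_meas n A : meas PS A -> meas PS (fun w => A (Nat.iter n f w)).
Proof.
  revert A; induction n; intros A HA; simpl; auto.
  apply (IHn (fun w => A (f w))), f_meas, HA.
Qed.

Lemma iter_pres n A : meas PS A -> P PS (fun w => A (Nat.iter n f w)) = P PS A.
Proof.
  revert A; induction n; intros A HA; simpl; auto.
  rewrite (IHn (fun w => A (f w)) (f_meas A HA)). auto.
Qed.

Section Visits.
Variable G : Omega -> Prop.
Hypothesis G_meas : meas PS G.

Definition wandering (w : Omega) : Prop := G w /\ forall k, ~ G (Nat.iter (S k) f w).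

Definition recurrent (w : Omega) : Prop :=
  forall K, exists k, (K <= k)%nat /\ G (Nat.iter k f w).

Lemma wandering_meas : meas PS wandering.
Proof.
  apply meas_and; auto. apply meas_cinter; intros k. apply meas_compl, iter_meas, G_meas.
Qed.

(* The preimages of the wandering set are pairwise disjoint and have equal
   probability, so by countable additivity it is null. *)
Lemma wandering_null : P PS wandering = 0.
Proof.
  set (A := fun n w => wandering (Nat.iter n f w)).
  assert (HA : forall n, meas PS (A n)) by (intros n; apply iter_meas, wandering_meas).
  assert (Hdis : forall m n x, A m x -> A n x -> m = n).
  { assert (Hlt : forall m n x, (m < n)%nat -> A m x -> A n x -> False).
    { intros m n x Hmn [_ Hm] [Hn _].
      apply (Hm (n - S m)%nat). rewrite <- Nat.iter_add.
      replace (S (n - S m) + m)%nat with n by lia. auto. }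
    intros m n x Hmx Hnx. destruct (lt_eq_lt_dec m n) as [[Hl|]|Hl]; auto; exfalso; eauto. }
  pose proof (P_sigma_additive _ PS A HA Hdis) as Hs.
  apply (const_sum_zero _ (P PS (fun x => exists n, A n x))).
  intros eps He; destruct (Hs eps He) as [N HN]; exists N; intros n Hn.
  rewrite <- (sum_eq (fun n => P PS (A n))); auto.
  intros i _; apply iter_pres, wandering_meas.
Qed.

Lemma recurrent_meas : meas PS recurrent.
Proof.
  apply meas_cinter; intros K. apply meas_union; intros k. apply meas_cond, iter_meas, G_meas.
Qed.

Lemma recurrent_invariant w : recurrent (f w) <-> recurrent w.
Proof.
  split; intros H K.
  - destruct (H K) as [k [Hk Hg]]. exists (S k); split; [lia|]. rewrite Nat.iter_succ_r; auto.
  - destruct (H (S K)) as [[|k] [Hk Hg]]; [lia|].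
    exists k; split; [lia|]. rewrite <- Nat.iter_succ_r; auto.
Qed.

Lemma last_visit w : G w -> ~ recurrent w -> exists n, wandering (Nat.iter n f w).
Proof.
  intros Hg Hr.
  assert (HK : exists K, forall k, (K <= k)%nat -> ~ G (Nat.iter k f w)).
  { apply NNPP; intros Hc; apply Hr. intros K. apply NNPP; intros Hc2.
    apply Hc. exists K. intros k Hk Hgk; apply Hc2; eauto. }
  destruct HK as [K HK].
  destruct (least_witness (fun K => forall k, (K <= k)%nat -> ~ G (Nat.iter k f w)) K HK)
    as [[|n] [Hn Hmin]].
  - exfalso; apply (Hn 0%nat); auto.
  - exists n. split.
    + apply NNPP; intros Hgn; apply (Hmin n); [lia|].
      intros k Hk Hgk. destruct (Nat.eq_dec k n) as [->|]; [auto|]. apply (Hn k); [lia|auto].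
    + intros k. rewrite <- Nat.iter_add. apply Hn. lia.
Qed.

Lemma transient_part_null : P PS (fun w => G w /\ ~ recurrent w) = 0.
Proof.
  assert (Hm : meas PS (fun w => G w /\ ~ recurrent w))
    by (apply meas_and; auto; apply meas_compl, recurrent_meas).
  set (A := fun n w => wandering (Nat.iter n f w)).
  assert (HA : forall n, meas PS (A n)) by (intros n; apply iter_meas, wandering_meas).
  assert (Hnull : P PS (fun w => exists n, A n w) = 0).
  { apply P_null_union; auto. intros n. unfold A.
    rewrite iter_pres by apply wandering_meas. apply wandering_null. }
  pose proof (P_nonneg _ PS _ Hm).
  pose proof (P_mono _ _ Hm (meas_union _ PS _ HA) (fun w H => last_visit w (proj1 H) (proj2 H))).
  lra.
Qed.

End Visits.

Theorem recurrence G : meas PS G -> P PS G > 0 ->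
  exists Z, meas PS Z /\ P PS Z = 0 /\
    forall w, ~ Z w -> forall K, exists k, (K <= k)%nat /\ G (Nat.iter k f w).
Proof.
  intros HG HPG. pose proof (recurrent_meas G HG) as HD.
  destruct (f_ergodic _ HD (recurrent_invariant G)) as [HD0|HD1].
  - exfalso.
    assert (Hcov : P PS G <= P PS (fun w => recurrent G w \/ (G w /\ ~ recurrent G w))).
    { apply P_mono; auto.
      - apply meas_or; auto. apply meas_and; auto. apply meas_compl; auto.
      - intros w Hg. destruct (classic (recurrent G w)); auto. }
    rewrite null_or in Hcov; auto using transient_part_null.
    + lra.
    + apply meas_and; auto. apply meas_compl; auto.
  - exists (fun w => ~ recurrent G w). split; [apply meas_compl; auto|]. split.
    + rewrite P_compl; auto. lra.
    + intros w Hw. apply NNPP in Hw. exact Hw.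
Qed.

End Recurrence.

Arguments iter_meas {Omega PS}. Arguments iter_pres {Omega PS}. Arguments recurrence {Omega PS}.

Section Paths.
Variable Omega : Type.
Variable theta : Omega -> Omega.
Variable ell : Omega -> option nat.
Variable alpha : Omega -> nat -> nat -> bool.

(* [x] is admissible for [w] up to the transition from time n-1 to time n;
   the letter at time n itself is not constrained. *)
Definition path_upto (w : Omega) (x : nat -> nat) (n : nat) : Prop :=
  forall i, (i < n)%nat -> lt_len (x i) (ell (Nat.iter i theta w)) /\
    alpha (Nat.iter i theta w) (x i) (x (S i)) = true.

(* A path of length n from [a] at time 0 to [b] at time n, i.e. a word
   in W^n_w(a,b) followed by [b]. *)
Definition reach (w : Omega) (a n b : nat) : Prop :=
  exists x, path_upto w x n /\ x 0%nat = a /\ x n = b.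

Lemma reach_Wab w a n b : (1 <= n)%nat -> reach w a n b -> Wab_nonempty theta ell alpha n w a b.
Proof.
  intros Hn [x [Hp [<- <-]]].
  assert (Hnth : forall i, (i < n)%nat -> nth i (map x (seq 0 n)) 0%nat = x i).
  { intros i Hi. rewrite (nth_indep _ _ (x 0%nat)) by (rewrite length_map, length_seq; auto).
    rewrite map_nth, seq_nth by auto. reflexivity. }
  exists (map x (seq 0 n)). rewrite length_map, length_seq.
  split; [reflexivity|]. split; [split|split].
  - intros i Hi. rewrite length_map, length_seq in Hi. rewrite Hnth by auto. apply Hp; auto.
  - intros i Hi. rewrite length_map, length_seq in Hi. rewrite !Hnth by lia. apply Hp; lia.
  - apply Hnth; lia.
  - rewrite Hnth by lia. destruct (Hp (n - 1)%nat ltac:(lia)) as [_ H].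
    replace (S (n - 1)) with n in H by lia. auto.
Qed.

Lemma reach_of_in_X w x n : in_X theta ell alpha w x -> reach w (x 0%nat) n (x n).
Proof. intros H. exists x. split; auto. intros i _; apply H. Qed.

Lemma reach_snoc w a n c b : reach w a n c -> lt_len c (ell (Nat.iter n theta w)) ->
  alpha (Nat.iter n theta w) c b = true -> reach w a (S n) b.
Proof.
  intros [x [Hp [Hx0 Hxn]]] Hl Ha.
  exists (fun i => if Nat.eqb i (S n) then b else x i). split; [|split; [auto|]].
  - intros i Hi. assert (Nat.eqb i (S n) = false) as -> by (apply Nat.eqb_neq; lia).
    destruct (Nat.eq_dec i n) as [->|Hne].
    + rewrite Nat.eqb_refl, Hxn. auto.
    + assert (Nat.eqb (S i) (S n) = false) as -> by (apply Nat.eqb_neq; lia). apply Hp; lia.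
  - rewrite Nat.eqb_refl; auto.
Qed.

Lemma reach_cons v b c n a : lt_len b (ell v) -> alpha v b c = true ->
  reach (theta v) c n a -> reach v b (S n) a.
Proof.
  intros Hl Ha [x [Hp [Hx0 Hxn]]].
  exists (fun i => match i with 0%nat => b | S j => x j end). split; [|split; auto].
  intros [|i] Hi; simpl; [rewrite Hx0; auto|].
  replace (theta (Nat.iter i theta v)) with (Nat.iter i theta (theta v))
    by (rewrite <- Nat.iter_succ_r; reflexivity).
  apply Hp; lia.
Qed.

End Paths.

Arguments reach {Omega} theta ell alpha w a n b.

Fixpoint sum_upto (g : nat -> nat) (M : nat) : nat :=
  match M with 0%nat => g 0%nat | S m => (sum_upto g m + g (S m))%nat end.

Lemma sum_upto_ge g M h : (h <= M)%nat -> (g h <= sum_upto g M)%nat.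
Proof.
  induction M; intros H; simpl.
  - replace h with 0%nat by lia; lia.
  - destruct (Nat.eq_dec h (S M)) as [->|]; [lia|]. specialize (IHM ltac:(lia)); lia.
Qed.

Lemma list_max_ge l b : In b l -> (b <= list_max l)%nat.
Proof.
  intros H. pose proof (proj1 (list_max_le l (list_max l)) (le_n _)) as HF.
  rewrite Forall_forall in HF; auto.
Qed.

Section BIP.
Variable Omega : Type.
Variable PS : probability_space Omega.
Variables theta thinv : Omega -> Omega.
Variable ell : Omega -> option nat.
Variable alpha : Omega -> nat -> nat -> bool.
Hypothesis Hth : invertible_mpt_ergodic PS theta thinv.
Hypothesis Hdata : random_shift_data PS theta ell alpha.
Hypothesis Hbip : bip_property PS theta thinv ell alpha.

Lemma thinv_theta w : thinv (theta w) = w. Proof. apply Hth. Qed.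
Lemma theta_thinv w : theta (thinv w) = w. Proof. apply Hth. Qed.
Lemma theta_meas A : meas PS A -> meas PS (fun w => A (theta w)). Proof. apply Hth. Qed.
Lemma thinv_meas A : meas PS A -> meas PS (fun w => A (thinv w)). Proof. apply Hth. Qed.
Lemma theta_pres A : meas PS A -> P PS (fun w => A (theta w)) = P PS A. Proof. apply Hth. Qed.
Lemma theta_ergodic A : meas PS A -> (forall w, A (theta w) <-> A w) -> P PS A = 0 \/ P PS A = 1.
Proof. apply Hth. Qed.

Lemma thinv_pres A : meas PS A -> P PS (fun w => A (thinv w)) = P PS A.
Proof.
  intros HA. rewrite <- (theta_pres _ (thinv_meas A HA)).
  apply P_ext. intros x; rewrite thinv_theta; tauto.
Qed.

Lemma thinv_ergodic A : meas PS A -> (forall w, A (thinv w) <-> A w) -> P PS A = 0 \/ P PS A = 1.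
Proof.
  intros HA H. apply theta_ergodic; auto. intros w. rewrite <- (H (theta w)), thinv_theta. tauto.
Qed.

Lemma iter_theta_thinv m w : Nat.iter m theta (Nat.iter m thinv w) = w.
Proof.
  induction m; auto. simpl Nat.iter at 2. rewrite Nat.iter_succ_r, theta_thinv; auto.
Qed.

Lemma letter_meas b : meas PS (fun w => lt_len b (ell w)).
Proof.
  destruct Hdata as [Hmell _].
  apply (meas_ext (fun w => (exists k, (b < k)%nat /\ ell w = Some k) \/ ~ exists k, ell w = Some k)).
  - intros w; unfold lt_len; destruct (ell w) as [m|]; split.
    + intros [[k [Hk He]]|Hn]; [inversion He; subst; auto|exfalso; eauto].
    + intros Hm; left; eauto.
    + auto.
    + intros _; right; intros [k Hk]; discriminate.
  - apply meas_or.
    + apply meas_union; intros k. apply meas_cond; auto.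
    + apply meas_compl, meas_union; intros k; auto.
Qed.

Lemma alpha_meas i j : meas PS (fun w => alpha w i j = true).
Proof. apply Hdata. Qed.

Definition occurs_at (b j : nat) (w : Omega) : Prop :=
  lt_len b (ell (Nat.iter j theta w)) \/ lt_len b (ell (Nat.iter j thinv w)).

Lemma occurs_at_meas b j : meas PS (occurs_at b j).
Proof.
  apply meas_or.
  - apply (iter_meas theta theta_meas j (fun w => lt_len b (ell w))), letter_meas.
  - apply (iter_meas thinv thinv_meas j (fun w => lt_len b (ell w))), letter_meas.
Qed.

Lemma occurs_at_null b j : ~ in_W1 PS ell b -> P PS (occurs_at b j) = 0.
Proof.
  intros Hb.
  assert (Hb0 : P PS (fun w => lt_len b (ell w)) = 0).
  { pose proof (P_nonneg _ PS _ (letter_meas b)). unfold in_W1, Omega_sym in Hb. lra. }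
  apply null_or.
  - apply (iter_meas theta theta_meas j (fun w => lt_len b (ell w))), letter_meas.
  - apply (iter_meas thinv thinv_meas j (fun w => lt_len b (ell w))), letter_meas.
  - rewrite (iter_pres theta theta_meas theta_pres j (fun w => lt_len b (ell w)));
      auto using letter_meas.
  - rewrite (iter_pres thinv thinv_meas thinv_pres j (fun w => lt_len b (ell w)));
      auto using letter_meas.
Qed.

Definition meets_null_letter (w : Omega) : Prop :=
  exists b j, ~ in_W1 PS ell b /\ occurs_at b j w.

Lemma meets_null_letter_meas : meas PS meets_null_letter.
Proof.
  apply meas_union; intros b; apply meas_union; intros j. apply meas_cond, occurs_at_meas.
Qed.

Lemma meets_null_letter_null : P PS meets_null_letter = 0.
Proof.
  apply P_null_union; intros b.
  - apply meas_union; intros j. apply meas_cond, occurs_at_meas.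
  - apply P_null_union; intros j; [apply meas_cond, occurs_at_meas|].
    destruct (classic (in_W1 PS ell b)) as [Hw|Hw].
    + rewrite (P_ext _ (fun _ => False)) by tauto. apply P_empty.
    + rewrite (P_ext _ (occurs_at b j)) by tauto. apply occurs_at_null; auto.
Qed.

Lemma forward_letter_W1 w j b : ~ meets_null_letter w ->
  lt_len b (ell (Nat.iter j theta w)) -> in_W1 PS ell b.
Proof. intros Hw Hb. apply NNPP; intros Hn; apply Hw. exists b, j. unfold occurs_at. auto. Qed.

Lemma backward_letter_W1 w j b : ~ meets_null_letter w ->
  lt_len b (ell (Nat.iter j thinv w)) -> in_W1 PS ell b.
Proof. intros Hw Hb. apply NNPP; intros Hn; apply Hw. exists b, j. unfold occurs_at. auto. Qed.

Definition mixing_time (a c : nat) (N : Omega -> nat) : Prop :=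
  (forall k, meas PS (fun w => N w = k)) /\
  forall w n, Omega_sym ell a w -> (N w <= n)%nat -> Omega_sym ell c (Nat.iter n theta w) ->
    exists x, in_X theta ell alpha w x /\ x 0%nat = a /\ x n = c.

Definition mix (a c : nat) : Omega -> nat :=
  epsilon (inhabits (fun _ : Omega => 0%nat)) (mixing_time a c).

Lemma mix_spec a c : in_W1 PS ell a -> in_W1 PS ell c -> mixing_time a c (mix a c).
Proof.
  intros Ha Hc. unfold mix. apply epsilon_spec. destruct Hbip as [Hmix _]. apply (Hmix a c Ha Hc).
Qed.

Lemma reach_by_mixing a c w n : in_W1 PS ell a -> in_W1 PS ell c -> Omega_sym ell a w ->
  (mix a c w <= n)%nat -> lt_len c (ell (Nat.iter n theta w)) -> reach theta ell alpha w a n c.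
Proof.
  intros Ha Hc Hw Hn Hcn. destruct (proj2 (mix_spec a c Ha Hc) w n Hw Hn Hcn) as [x [HX [<- <-]]].
  apply reach_of_in_X; auto.
Qed.

Definition orphan (j : nat) (v : Omega) : Prop :=
  lt_len j (ell v) /\ ~ exists i, lt_len i (ell (thinv v)) /\ alpha (thinv v) i j = true.

Lemma orphan_meas j : meas PS (orphan j).
Proof.
  apply meas_and; [apply letter_meas|]. apply meas_compl, meas_union; intros i.
  apply meas_and; [apply (thinv_meas _ (letter_meas i))|apply (thinv_meas _ (alpha_meas i j))].
Qed.

(* Orphans are null: otherwise the orbit of a typical point of Omega_a returns
   to the orphan set after the mixing time from [a] to [j], and the mixing
   path supplies a predecessor. *)
Lemma orphan_null a j : in_W1 PS ell a -> P PS (orphan j) = 0.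
Proof.
  intros Ha. destruct (Rle_lt_or_eq_dec _ _ (P_nonneg _ PS _ (orphan_meas j))) as [Hp|]; auto.
  exfalso.
  assert (Hj : in_W1 PS ell j).
  { unfold in_W1, Omega_sym.
    pose proof (P_mono _ _ (orphan_meas j) (letter_meas j) (fun x H => proj1 H)). lra. }
  destruct (recurrence theta theta_meas theta_pres theta_ergodic _ (orphan_meas j) Hp)
    as [Z [HZm [HZ0 HZ]]].
  destruct (P_pos_exists _ Z (letter_meas a) HZm Ha HZ0) as [w0 [Hw0 Hnz]].
  destruct (HZ w0 Hnz (S (mix a j w0))) as [[|k] [Hk [Hjk Hno]]]; [lia|].
  destruct (reach_by_mixing a j w0 (S k) Ha Hj Hw0 ltac:(lia) Hjk) as [x [Hx [_ Hxk]]].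
  apply Hno. exists (x k). simpl. rewrite thinv_theta, <- Hxk. apply Hx. lia.
Qed.

Definition meets_orphan (w : Omega) : Prop := exists j n, orphan j (Nat.iter n theta w).

Lemma meets_orphan_meas : meas PS meets_orphan.
Proof.
  apply meas_union; intros j; apply meas_union; intros n.
  apply (iter_meas theta theta_meas n (orphan j)), orphan_meas.
Qed.

Lemma meets_orphan_null a : in_W1 PS ell a -> P PS meets_orphan = 0.
Proof.
  intros Ha. apply P_null_union; intros j.
  - apply meas_union; intros n. apply (iter_meas theta theta_meas n (orphan j)), orphan_meas.
  - apply P_null_union; intros n.
    + apply (iter_meas theta theta_meas n (orphan j)), orphan_meas.
    + rewrite (iter_pres theta theta_meas theta_pres n (orphan j)) by apply orphan_meas.
      apply (orphan_null a j Ha).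
Qed.

Definition preimage_bounded (M : nat) (v : Omega) : Prop :=
  forall c, lt_len c (ell v) ->
    exists b, (b <= M)%nat /\ lt_len b (ell (thinv v)) /\ alpha (thinv v) b c = true.

Lemma preimage_bounded_meas M : meas PS (preimage_bounded M).
Proof.
  apply meas_cinter; intros c. apply meas_imp; [apply letter_meas|].
  apply meas_union; intros b. apply meas_cond, meas_and;
    [apply (thinv_meas _ (letter_meas b))|apply (thinv_meas _ (alpha_meas b c))].
Qed.

(* The finite sets I_bp^w lie below max I_bp^w, so some uniform bound works
   on a set of positive probability. *)
Lemma preimage_bounded_pos : exists M, P PS (preimage_bounded M) > 0.
Proof.
  destruct Hbip as [_ [_ [Obp [I [Hm [Hp HI]]]]]].
  apply (P_pos_union _ Obp preimage_bounded_meas Hm Hp). intros w Hw. exists (list_max (I w)).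
  intros c Hc. destruct (proj2 (HI w Hw) c Hc) as [b [Hb Hbc]].
  exists b. split; [apply list_max_ge; auto|]. split; [apply (proj1 (HI w Hw)); auto|auto].
Qed.

(* First time for (i): a visit to [preimage_bounded M] after all mixing times
   from [a] to the letters [c <= M]. *)
Lemma forward_base a w M k : in_W1 PS ell a -> Omega_sym ell a w -> ~ meets_null_letter w ->
  (sum_upto (fun c => mix a c w) M <= k)%nat -> preimage_bounded M (Nat.iter (S k) theta w) ->
  forall b, lt_len b (ell (Nat.iter (S k) theta w)) -> reach theta ell alpha w a (S k) b.
Proof.
  intros Ha Hw Hnull Hk HG b Hb.
  destruct (HG b Hb) as [c [HcM [Hc Hcb]]]. simpl in Hc, Hcb. rewrite thinv_theta in Hc, Hcb.
  assert (HcW : in_W1 PS ell c) by exact (forward_letter_W1 w k c Hnull Hc).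
  pose proof (sum_upto_ge (fun c => mix a c w) M c HcM).
  apply (reach_snoc _ _ _ _ w a k c b); auto.
  apply reach_by_mixing; auto. lia.
Qed.

Lemma forward_extend a w n : ~ meets_orphan w ->
  (forall b, lt_len b (ell (Nat.iter n theta w)) -> reach theta ell alpha w a n b) ->
  forall b, lt_len b (ell (Nat.iter (S n) theta w)) -> reach theta ell alpha w a (S n) b.
Proof.
  intros Horph IH b Hb.
  assert (Hpred : exists i, lt_len i (ell (Nat.iter n theta w)) /\
                    alpha (Nat.iter n theta w) i b = true).
  { apply NNPP; intros Hn; apply Horph. exists b, (S n). split; auto.
    simpl. rewrite thinv_theta. exact Hn. }
  destruct Hpred as [i [Hi Hib]].
  apply (reach_snoc _ _ _ _ w a n i b); auto.
Qed.

Lemma forward_words_ae a : in_W1 PS ell a ->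
  exists Z, meas PS Z /\ P PS Z = 0 /\ forall w, Omega_sym ell a w -> ~ Z w ->
  exists al, forall n b, (al <= n)%nat -> lt_len b (ell (Nat.iter n theta w)) ->
    Wab_nonempty theta ell alpha n w a b.
Proof.
  intros Ha. destruct preimage_bounded_pos as [M HM].
  destruct (recurrence theta theta_meas theta_pres theta_ergodic _ (preimage_bounded_meas M) HM)
    as [Zr [HZrm [HZr0 HZr]]].
  exists (fun w => meets_null_letter w \/ meets_orphan w \/ Zr w).
  split; [repeat apply meas_or; auto using meets_null_letter_meas, meets_orphan_meas|].
  pose proof (meets_orphan_null a Ha).
  split; [repeat apply null_or;
    auto using meets_null_letter_meas, meets_orphan_meas, meets_null_letter_null, meas_or|].
  intros w Hw Hbad.
  destruct (HZr w ltac:(tauto) (S (sum_upto (fun c => mix a c w) M))) as [[|k] [Hk HG]]; [lia|].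
  assert (Hpaths : forall d b, lt_len b (ell (Nat.iter (S k + d) theta w)) ->
                      reach theta ell alpha w a (S k + d) b).
  { induction d as [|d IH].
    - rewrite Nat.add_0_r. apply (forward_base a w M k); auto; lia.
    - rewrite Nat.add_succ_r. apply forward_extend; auto. }
  exists (S k). intros n b Hn Hb. apply reach_Wab; [lia|].
  replace n with (S k + (n - S k))%nat in * by lia. apply Hpaths; auto.
Qed.

Definition image_bounded (M : nat) (v : Omega) : Prop :=
  forall c, lt_len c (ell (thinv v)) ->
    exists b, (b <= M)%nat /\ lt_len b (ell v) /\ alpha (thinv v) c b = true.

Lemma image_bounded_meas M : meas PS (image_bounded M).
Proof.
  apply meas_cinter; intros c. apply meas_imp; [apply (thinv_meas _ (letter_meas c))|].
  apply meas_union; intros b.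
  apply meas_cond, meas_and; [apply letter_meas|apply (thinv_meas _ (alpha_meas c b))].
Qed.

Lemma image_bounded_pos : exists M, P PS (image_bounded M) > 0.
Proof.
  destruct Hbip as [_ [[Obi [I [Hm [Hp HI]]]] _]].
  apply (P_pos_union _ Obi image_bounded_meas Hm Hp). intros w Hw. exists (list_max (I w)).
  intros c Hc. destruct (proj2 (HI w Hw) c Hc) as [b [Hb Hcb]].
  exists b. split; [apply list_max_ge; auto|]. split; [apply (proj1 (HI w Hw)); auto|auto].
Qed.

Definition mixing_window (a M K : nat) (v : Omega) : Prop :=
  image_bounded M v /\
  forall h, (h <= M)%nat -> in_W1 PS ell h -> (mix h a v <= K)%nat.

Lemma mixing_window_meas a M K : in_W1 PS ell a -> meas PS (mixing_window a M K).
Proof.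
  intros Ha. apply meas_and; [apply image_bounded_meas|]. apply meas_cinter; intros h.
  destruct (classic ((h <= M)%nat /\ in_W1 PS ell h)) as [[HhM Hh]|Hn].
  - apply (meas_ext (fun v => exists k, (k <= K)%nat /\ mix h a v = k)).
    + intros v; split.
      * intros [k [Hk <-]] _ _; auto.
      * intros H; exists (mix h a v); auto.
    + apply meas_union; intros k; apply meas_cond. apply (mix_spec h a Hh Ha).
  - apply (meas_ext (fun _ => True)); [|apply meas_full].
    intros v; split; auto. intros _ HhM Hh; exfalso; auto.
Qed.

(* Finitely many mixing times are bounded by their sum. *)
Lemma mixing_window_pos a : in_W1 PS ell a -> exists M K, P PS (mixing_window a M K) > 0.
Proof.
  intros Ha. destruct image_bounded_pos as [M HM]. exists M.
  apply (P_pos_union _ _ (fun K => mixing_window_meas a M K Ha) (image_bounded_meas M) HM).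
  intros v Hv. exists (sum_upto (fun h => mix h a v) M). split; auto.
  intros h Hh _. apply (sum_upto_ge (fun h => mix h a v)); auto.
Qed.

Lemma backward_base a w M K m : in_W1 PS ell a -> Omega_sym ell a w -> ~ meets_null_letter w ->
  (K <= m)%nat -> mixing_window a M K (Nat.iter m thinv w) ->
  forall b, lt_len b (ell (Nat.iter (S m) thinv w)) ->
    reach theta ell alpha (Nat.iter (S m) thinv w) b (S m) a.
Proof.
  intros Ha Hw Hnull Hm [Himg Hmix] b Hb.
  set (v := Nat.iter m thinv w) in *. simpl in Hb |- *. fold v in Hb |- *.
  destruct (Himg b Hb) as [h [HhM [Hh Hbh]]].
  assert (HhW : in_W1 PS ell h) by exact (backward_letter_W1 w m h Hnull Hh).
  apply (reach_cons _ _ _ _ _ b h); auto. rewrite theta_thinv.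
  apply reach_by_mixing; auto.
  - specialize (Hmix h HhM HhW). lia.
  - unfold v. rewrite iter_theta_thinv. exact Hw.
Qed.

(* Since every row of the transition matrix has a 1, paths from all letters
   at time -n extend to paths from all letters at time -(n+1). *)
Lemma backward_extend a w n :
  (forall b, lt_len b (ell (Nat.iter n thinv w)) ->
     reach theta ell alpha (Nat.iter n thinv w) b n a) ->
  forall b, lt_len b (ell (Nat.iter (S n) thinv w)) ->
    reach theta ell alpha (Nat.iter (S n) thinv w) b (S n) a.
Proof.
  intros IH b Hb. destruct Hdata as [_ [_ [_ Hrow]]].
  destruct (Hrow _ b Hb) as [j [Hj Hbj]]. simpl in Hj, Hbj |- *. rewrite theta_thinv in Hj.
  apply (reach_cons _ _ _ _ _ b j); auto. rewrite theta_thinv. auto.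
Qed.

Lemma backward_words_ae a : in_W1 PS ell a ->
  exists Z, meas PS Z /\ P PS Z = 0 /\ forall w, Omega_sym ell a w -> ~ Z w ->
  exists be, forall n b, (be <= n)%nat -> lt_len b (ell (Nat.iter n thinv w)) ->
    Wab_nonempty theta ell alpha n (Nat.iter n thinv w) b a.
Proof.
  intros Ha. destruct (mixing_window_pos a Ha) as [M [K HMK]].
  destruct (recurrence thinv thinv_meas thinv_pres thinv_ergodic _
              (mixing_window_meas a M K Ha) HMK) as [Zr [HZrm [HZr0 HZr]]].
  exists (fun w => meets_null_letter w \/ Zr w).
  split; [apply meas_or; auto using meets_null_letter_meas|].
  split; [apply null_or; auto using meets_null_letter_meas, meets_null_letter_null|].
  intros w Hw Hbad. destruct (HZr w ltac:(tauto) K) as [m [Hm HG]].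
  assert (Hpaths : forall d b, lt_len b (ell (Nat.iter (S m + d) thinv w)) ->
                      reach theta ell alpha (Nat.iter (S m + d) thinv w) b (S m + d) a).
  { induction d as [|d IH].
    - rewrite Nat.add_0_r. apply (backward_base a w M K m); auto.
    - rewrite Nat.add_succ_r. apply backward_extend; auto. }
  exists (S m). intros n b Hn Hb. apply reach_Wab; [lia|].
  replace n with (S m + (n - S m))%nat in * by lia. apply Hpaths; auto.
Qed.

End BIP.

Theorem lemma3p2 (Omega : Type) (PS : probability_space Omega)
  (theta thinv : Omega -> Omega) (ell : Omega -> option nat)
  (alpha : Omega -> nat -> nat -> bool)
  (Hth : invertible_mpt_ergodic PS theta thinv)
  (Hdata : random_shift_data PS theta ell alpha)
  (Hbip : bip_property PS theta thinv ell alpha) :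
  forall a : nat, in_W1 PS ell a ->
  exists Null : Omega -> Prop, meas PS Null /\ P PS Null = 0 /\
  forall w, Omega_sym ell a w -> ~ Null w ->
  exists al be : nat,
    (forall n b, (al <= n)%nat -> lt_len b (ell (Nat.iter n theta w)) ->
       Wab_nonempty theta ell alpha n w a b) /\
    (forall n b, (be <= n)%nat -> lt_len b (ell (Nat.iter n thinv w)) ->
       Wab_nonempty theta ell alpha n (Nat.iter n thinv w) b a).
Proof.
  intros a Ha.
  destruct (forward_words_ae Omega PS theta thinv ell alpha Hth Hdata Hbip a Ha)
    as [Zf [HZfm [HZf0 Hfw]]].
  destruct (backward_words_ae Omega PS theta thinv ell alpha Hth Hdata Hbip a Ha)
    as [Zb [HZbm [HZb0 Hbw]]].
  exists (fun w => Zf w \/ Zb w).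
  split; [apply meas_or; auto|]. split; [apply null_or; auto|].
  intros w Hw Hnull.
  destruct (Hfw w Hw ltac:(tauto)) as [al Hal].
  destruct (Hbw w Hw ltac:(tauto)) as [be Hbe].
  exists al, be. split; auto.
Qed.
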